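(* For all terms $e_0, e_1, \dots, e_n$: if $e_0 \Rightarrow e_1$ and $e_1, \dots, e_n \in \mathcal{R}$, then there exist terms $e_1', \dots, e_p'$ such that $e_0, e_1', \dots, e_p', e_n \in \mathcal{R}$.
   Context: Terms: $e ::= x \mid \lambda x.e \mid e\,e$ (modulo $\alpha$-equivalence, Barendregt's variable convention). Values: $v ::= \lambda x.e$. A context is a term with one hole $[\,]$; $C[e]$ is plugging, $C_1[C_2]$ composition. Answer contexts: $A ::= [\,] \mid A[\lambda x.A]\,e$. Outer partial answer contexts: $A^{\uparrow} ::= [\,] \mid A[A^{\uparrow}]\,e$. Inner partial answer contexts: $A^{\downarrow} ::= [\,] \mid A[\lambda x.A^{\downarrow}]$. Evaluation contexts: $E ::= [\,] \mid E\,e \mid A[E] \mid A^{\uparrow}[A[\lambda x.A^{\downarrow}[E[x]]]\,E]$, where in the last production $A^{\uparrow}[A^{\downarrow}]$ must be an answer context. $e\{x:=v\}$: capture-avoiding substitution for all free occurrences of $x$. Axiom $\beta_{need}$: $A^{\uparrow}[A_1[\lambda x.A^{\downarrow}[E[x]]]\,A_2[v]] \;\beta_{need}\; A^{\uparrow}[A_1[A_2[(A^{\downarrow}[E[x]])\{x:=v\}]]]$ provided $A^{\uparrow}[A^{\downarrow}]$ is an answer context. Standard reduction: $E[e]\mapsto E[e']$ for every evaluation context $E$ whenever $e\;\beta_{need}\;e'$. Parallel reduction $\Rightarrow$ on terms is the least relation such that: $e\Rightarrow e$; $A^{\uparrow}[A_1[\lambda x.A^{\downarrow}[E[x]]]\,A_2[v]]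 \Rightarrow A^{\uparrow\prime}[A_1'[A_2'[(A^{\downarrow\prime}[E'[x]])\{x:=v'\}]]]$ whenever $A^{\uparrow}[A^{\downarrow}]$, $A^{\uparrow\prime}[A^{\downarrow\prime}]$ are answer contexts and $A^{\uparrow}\Rightarrow A^{\uparrow\prime}$, $A_1\Rightarrow A_1'$, $A_2\Rightarrow A_2'$, $A^{\downarrow}\Rightarrow A^{\downarrow\prime}$, $E\Rightarrow E'$, $v\Rightarrow v'$; $e_1\,e_2\Rightarrow e_1'\,e_2'$ if $e_1\Rightarrow e_1'$, $e_2\Rightarrow e_2'$; $\lambda x.e\Rightarrow\lambda x.e'$ if $e\Rightarrow e'$. On contexts (defined simultaneously): $[\,]\Rightarrow[\,]$; $A_1[\lambda x.A_2]\,e\Rightarrow A_1'[\lambda x.A_2']\,e'$; $A[A^{\uparrow}]\,e\Rightarrow A'[A^{\uparrow\prime}]\,e'$; $A[\lambda x.A^{\downarrow}]\Rightarrow A'[\lambda x.A^{\downarrow\prime}]$; $E\,e\Rightarrow E'\,e'$; $A[E]\Rightarrow A'[E']$; $A^{\uparrow}[A[\lambda x.A^{\downarrow}[E_1[x]]]\,E_2]\Rightarrow A^{\uparrow\prime}[A'[\lambda x.A^{\downarrow\prime}[E_1'[x]]]\,E_2']$ (with $A^{\uparrow}[A^{\downarrow}]$ an answer context), in each case provided every primed component is a parallel reduct of the corresponding unprimed one. The set $\mathcal{R}$ of standard reduction sequences is the least set of finite nonempty sequences of terms such that: (1) for every variable $x$, the sequence $x$ is in $\mathcal{R}$; (2)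 if $e_1,\dots,e_m\in\mathcal{R}$ then $\lambda x.e_1,\dots,\lambda x.e_m\in\mathcal{R}$; (3) if $e_0\mapsto e_1$ and $e_1,\dots,e_m\in\mathcal{R}$ then $e_0,e_1,\dots,e_m\in\mathcal{R}$; (4) if $e_1,\dots,e_m\in\mathcal{R}$ and $e_1',\dots,e_n'\in\mathcal{R}$ then $(e_1\,e_1'),\dots,(e_m\,e_1'),(e_m\,e_2'),\dots,(e_m\,e_n')\in\mathcal{R}$. *)

From Stdlib Require Import List Arith.
Import ListNotations.

Inductive term : Type :=
| Var : nat -> term
| Lam : term -> term
| App : term -> term -> term.

Definition value (t : term) : Prop := exists b, t = Lam b.

Fixpoint shift (d c : nat) (t : term) : term :=
  match t with
  | Var n => if c <=? n then Var (n + d) else Var n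
  | Lam b => Lam (shift d (S c) b)
  | App t1 t2 => App (shift d c t1) (shift d c t2)
  end.

(* subst k u t : capture-avoiding substitution of u (living outside the k
   binders) for index k, decrementing the free indices above k. *)
Fixpoint subst (k : nat) (u : term) (t : term) : term :=
  match t with
  | Var n => if n =? k then shift k 0 u
             else if k <? n then Var (n - 1) else Var n
  | Lam b => Lam (subst (S k) u b)
  | App t1 t2 => App (subst k u t1) (subst k u t2)
  end.

(* Contexts: terms with exactly one hole.  Plugging captures (binders on the
   path to the hole scope over the plugged term), as in the paper. *)
Inductive ctx : Type :=
| Hole : ctx
| CAppL : ctx -> term -> ctx
| CAppR : term -> ctx -> ctx
| CLam : ctx -> ctx.

Fixpoint plug (C : ctx) (t : term) : term :=
  match C with
  | Hole => t
  | CAppL C e => App (plug C t) e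
  | CAppR e C => App e (plug C t)
  | CLam C => Lam (plug C t)
  end.

Fixpoint compose (C1 C2 : ctx) : ctx :=
  match C1 with
  | Hole => C2
  | CAppL C e => CAppL (compose C C2) e
  | CAppR e C => CAppR e (compose C C2)
  | CLam C => CLam (compose C C2)
  end.

Fixpoint depth (C : ctx) : nat :=
  match C with
  | Hole => 0
  | CAppL C _ => depth C
  | CAppR _ C => depth C
  | CLam C => S (depth C)
  end.

Fixpoint shift_ctx (d c : nat) (C : ctx) : ctx :=
  match C with
  | Hole => Hole
  | CAppL C e => CAppL (shift_ctx d c C) (shift d c e)
  | CAppR e C => CAppR (shift d c e) (shift_ctx d c C)
  | CLam C => CLam (shift_ctx d (S c) C)
  end.

Inductive isA : ctx -> Prop :=
| isA_hole : isA Hole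
| isA_app : forall A1 A2 e, isA A1 -> isA A2 ->
    isA (CAppL (compose A1 (CLam A2)) e).

Inductive isAup : ctx -> Prop :=
| isAup_hole : isAup Hole
| isAup_app : forall A Au e, isA A -> isAup Au ->
    isAup (CAppL (compose A Au) e).

Inductive isAdown : ctx -> Prop :=
| isAdown_hole : isAdown Hole
| isAdown_lam : forall A Ad, isA A -> isAdown Ad ->
    isAdown (compose A (CLam Ad)).

(* the term  λx.A^down[E[x]]  (x bound by this λ) *)
Definition lam_need (Ad E : ctx) : term :=
  Lam (plug Ad (plug E (Var (depth E + depth Ad)))).

Inductive isE : ctx -> Prop :=
| isE_hole : isE Hole
| isE_appl : forall E e, isE E -> isE (CAppL E e)
| isE_ans : forall A E, isA A -> isE E -> isE (compose A E)
| isE_need : forall Au A Ad E1 E2,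
    isAup Au -> isA A -> isAdown Ad -> isE E1 -> isE E2 ->
    isA (compose Au Ad) ->
    isE (compose Au (CAppR (plug A (lam_need Ad E1)) E2)).

Definition redex (Au A1 Ad E A2 : ctx) (v : term) : term :=
  plug Au (App (plug A1 (lam_need Ad E)) (plug A2 v)).

(* Contractum  A^up[A1[A2[(A^down[E[x]]){x:=v}]]]  (in de Bruijn form:
   A2 is moved under the binders of A1, v under those of A1 and A2). *)
Definition contractum (Au A1 Ad E A2 : ctx) (v : term) : term :=
  let k1 := depth A1 in
  let k2 := depth A2 in
  plug Au (plug A1 (plug (shift_ctx k1 0 A2)
    (subst 0 (shift k1 k2 v)
       (shift k2 1 (plug Ad (plug E (Var (depth E + depth Ad)))))))).

Inductive beta_need : term -> term -> Prop :=
| beta_need_intro : forall Au A1 Ad E A2 v,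
    isAup Au -> isA A1 -> isAdown Ad -> isE E -> isA A2 -> value v ->
    isA (compose Au Ad) ->
    beta_need (redex Au A1 Ad E A2 v) (contractum Au A1 Ad E A2 v).

Inductive std_step : term -> term -> Prop :=
| std_step_intro : forall E r r', isE E -> beta_need r r' ->
    std_step (plug E r) (plug E r').

Inductive pr : term -> term -> Prop :=
| pr_refl : forall e, pr e e
| pr_beta : forall Au A1 Ad E A2 v Au' A1' Ad' E' A2' v',
    isAup Au -> isA A1 -> isAdown Ad -> isE E -> isA A2 -> value v ->
    isA (compose Au Ad) ->
    isAup Au' -> isA A1' -> isAdown Ad' -> isE E' -> isA A2' -> value v' ->
    isA (compose Au' Ad') ->
    pr_ctx Au Au' -> pr_ctx A1 A1' -> pr_ctx A2 A2' -> pr_ctx Ad Ad' ->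
    pr_ctx E E' -> pr v v' ->
    pr (redex Au A1 Ad E A2 v) (contractum Au' A1' Ad' E' A2' v')
| pr_app : forall e1 e2 e1' e2', pr e1 e1' -> pr e2 e2' ->
    pr (App e1 e2) (App e1' e2')
| pr_lam : forall e e', pr e e' -> pr (Lam e) (Lam e')
with pr_ctx : ctx -> ctx -> Prop :=
| prc_hole : pr_ctx Hole Hole
| prc_A : forall A1 A2 e A1' A2' e',
    isA A1 -> isA A2 -> isA A1' -> isA A2' ->
    pr_ctx A1 A1' -> pr_ctx A2 A2' -> pr e e' ->
    pr_ctx (CAppL (compose A1 (CLam A2)) e) (CAppL (compose A1' (CLam A2')) e')
| prc_Aup : forall A Au e A' Au' e',
    isA A -> isAup Au -> isA A' -> isAup Au' ->
    pr_ctx A A' -> pr_ctx Au Au' -> pr e e' ->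
    pr_ctx (CAppL (compose A Au) e) (CAppL (compose A' Au') e')
| prc_Adown : forall A Ad A' Ad',
    isA A -> isAdown Ad -> isA A' -> isAdown Ad' ->
    pr_ctx A A' -> pr_ctx Ad Ad' ->
    pr_ctx (compose A (CLam Ad)) (compose A' (CLam Ad'))
| prc_Eapp : forall E e E' e',
    isE E -> isE E' -> pr_ctx E E' -> pr e e' ->
    pr_ctx (CAppL E e) (CAppL E' e')
| prc_Eans : forall A E A' E',
    isA A -> isE E -> isA A' -> isE E' ->
    pr_ctx A A' -> pr_ctx E E' ->
    pr_ctx (compose A E) (compose A' E')
| prc_Eneed : forall Au A Ad E1 E2 Au' A' Ad' E1' E2',
    isAup Au -> isA A -> isAdown Ad -> isE E1 -> isE E2 ->
    isA (compose Au Ad) ->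
    isAup Au' -> isA A' -> isAdown Ad' -> isE E1' -> isE E2' ->
    isA (compose Au' Ad') ->
    pr_ctx Au Au' -> pr_ctx A A' -> pr_ctx Ad Ad' ->
    pr_ctx E1 E1' -> pr_ctx E2 E2' ->
    pr_ctx (compose Au (CAppR (plug A (lam_need Ad E1)) E2))
           (compose Au' (CAppR (plug A' (lam_need Ad' E1')) E2')).

Inductive R : list term -> Prop :=
| R_var : forall n, R [Var n]
| R_lam : forall e l, R (e :: l) -> R (map Lam (e :: l))
| R_step : forall e0 e1 l, std_step e0 e1 -> R (e1 :: l) -> R (e0 :: e1 :: l)
| R_app : forall e1 l f1 l', R (e1 :: l) -> R (f1 :: l') ->
    R (map (fun e => App e f1) (e1 :: l) ++ map (App (last l e1)) l').

From Stdlib Require Import List Arith Lia.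
Import ListNotations.

(* Parallel reduction is contained in [rpr], a parallel reduction that may
   first contract the root of any subterm and only then reduce inside it: a
   parallel contraction is a root contraction followed by [rpr] on the pieces
   of the contractum, and [rpr] is stable under substitution.  The
   heart of the proof is a postponement property: if [rpr t u] and [u] makes a
   standard step to [u'], then [t] makes standard steps to some [t''] with
   [rpr t'' u'].  It is proved by tracing the evaluation context of the
   standard redex of [u] back into [t]: every piece of [u] that lies on the
   path to the redex is reached from the corresponding piece of [t] by
   standard steps (root contractions of [rpr]), by lexicographic induction on
   the number of root contractions and on the size of [u].  Induction on the
   standard reduction sequence then concludes, the prefix [t |->* t''] being
   absorbed by rule (3) of [R]. *)

(** * De Bruijn algebra *)

Ltac index_cases := cbn [shift subst]; repeat (match goal with
 | |- context [?a <=? ?b] => destruct (Nat.leb_spec a b)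
 | |- context [?a =? ?b] => destruct (Nat.eqb_spec a b)
 | |- context [?a <? ?b] => destruct (Nat.ltb_spec a b)
 end; cbn [shift subst]).

Lemma shift_shift_merge : forall t p n c i, c <= i <= c + n ->
  shift p i (shift n c t) = shift (p + n) c t.
Proof.
  induction t; intros; index_cases; try (f_equal; lia); f_equal; auto.
  apply IHt; lia.
Qed.

Lemma shift_shift_comm : forall t p n c i, i <= c ->
  shift p i (shift n c t) = shift n (p + c) (shift p i t).
Proof.
  induction t; intros; index_cases; try (f_equal; lia); f_equal; auto.
  replace (S (p + c)) with (p + S c) by lia. apply IHt; lia.
Qed.

Lemma shift_subst_below : forall t p k n u, k <= n ->
  shift p k (subst n u t) = subst (p + n) u (shift p k t).
Proof.
  induction t; intros; index_cases; try (f_equal; lia); try (exfalso; lia).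
  - rewrite shift_shift_merge by lia; reflexivity.
  - f_equal. replace (S (p + n)) with (p + S n) by lia. apply IHt; lia.
  - f_equal; auto.
Qed.

Lemma shift_subst_above : forall t p k n u, n <= k ->
  shift p k (subst n u t) = subst n (shift p (k - n) u) (shift p (S k) t).
Proof.
  induction t; intros; index_cases; try (f_equal; lia); try (exfalso; lia).
  - subst. symmetry. rewrite shift_shift_comm by lia. f_equal. lia.
  - f_equal. rewrite IHt by lia. repeat f_equal; lia.
  - f_equal; auto.
Qed.

Lemma subst_shift_cancel : forall t u p n k, k <= p <= n + k ->
  subst p u (shift (S n) k t) = shift n k t.
Proof.
  induction t; intros; index_cases; try (f_equal; lia); try (exfalso; lia).
  - f_equal. apply IHt; lia.
  - f_equal; auto.
Qed.

Lemma subst_subst : forall T U V p n,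
  subst (p + n) V (subst n U T) = subst n (subst p V U) (subst (S (p + n)) V T).
Proof.
  induction T; intros; index_cases; try (f_equal; lia); try (exfalso; lia).
  - subst. rewrite shift_subst_below by lia. f_equal; lia.
  - subst. rewrite subst_shift_cancel by lia. reflexivity.
  - f_equal. replace (S (p + n)) with (p + S n) by lia. rewrite IHT. f_equal.
  - f_equal; auto.
Qed.

Lemma plug_compose : forall C1 C2 t, plug (compose C1 C2) t = plug C1 (plug C2 t).
Proof. induction C1; intros; simpl; f_equal; auto. Qed.

Lemma compose_assoc : forall C1 C2 C3,
  compose (compose C1 C2) C3 = compose C1 (compose C2 C3).
Proof. induction C1; intros; simpl; f_equal; auto. Qed.

Lemma compose_hole_r : forall C, compose C Hole = C.
Proof. induction C; simpl; f_equal; auto. Qed.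

Lemma compose_eq_inv : forall A B X Y, compose A B = compose X Y ->
  (exists Z, X = compose A Z /\ B = compose Z Y) \/
  (exists Z, A = compose X Z /\ Y = compose Z B).
Proof.
  induction A; intros B X Y H; simpl in H.
  - left. exists X. auto.
  - destruct X; simpl in H; try discriminate.
    + right. exists (CAppL A t). auto.
    + injection H as H <-. destruct (IHA _ _ _ H) as [(Z&->&->)|(Z&->&->)].
      * left. exists Z. auto.
      * right. exists Z. auto.
  - destruct X; simpl in H; try discriminate.
    + right. exists (CAppR t A). auto.
    + injection H as <- H. destruct (IHA _ _ _ H) as [(Z&->&->)|(Z&->&->)].
      * left. exists Z. auto.
      * right. exists Z. auto.
  - destruct X; simpl in H; try discriminate.
    + right. exists (CLam A). auto.
    + injection H as H. destruct (IHA _ _ _ H) as [(Z&->&->)|(Z&->&->)].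
      * left. exists Z. auto.
      * right. exists Z. auto.
Qed.

Fixpoint map_ctx (f : nat -> term -> term) (l : nat) (C : ctx) : ctx :=
  match C with
  | Hole => Hole
  | CAppL C e => CAppL (map_ctx f l C) (f l e)
  | CAppR e C => CAppR (f l e) (map_ctx f l C)
  | CLam C => CLam (map_ctx f (S l) C)
  end.

Definition structural (f : nat -> term -> term) : Prop :=
  (forall l b, f l (Lam b) = Lam (f (S l) b)) /\
  (forall l a b, f l (App a b) = App (f l a) (f l b)) /\
  (forall l n, n < l -> f l (Var n) = Var n).

Lemma shift_structural : forall d, structural (shift d).
Proof.
  intros d; split; [|split]; intros; simpl; auto.
  destruct (Nat.leb_spec l n); auto; lia.
Qed.

Lemma subst_structural : forall u, structural (fun k => subst k u).
Proof.
  intros u; split; [|split]; intros; simpl; auto.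
  destruct (Nat.eqb_spec n l); [lia|]. destruct (Nat.ltb_spec l n); auto; lia.
Qed.

Lemma shift_ctx_map_ctx : forall C d c, shift_ctx d c C = map_ctx (shift d) c C.
Proof. induction C; intros; simpl; f_equal; auto. Qed.

Lemma depth_map_ctx : forall f C l, depth (map_ctx f l C) = depth C.
Proof. induction C; intros; simpl; auto. Qed.

Section StructuralMap.
Variable f : nat -> term -> term.
Hypothesis f_structural : structural f.

Lemma map_plug : forall C l t, f l (plug C t) = plug (map_ctx f l C) (f (l + depth C) t).
Proof.
  destruct f_structural as [HL [HA _]].
  induction C; intros; simpl.
  - rewrite Nat.add_0_r; reflexivity.
  - rewrite HA, IHC. reflexivity.
  - rewrite HA, IHC. reflexivity.
  - rewrite HL, IHC. replace (l + S (depth C)) with (S l + depth C) by lia. reflexivity.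
Qed.

Lemma map_ctx_compose : forall C1 C2 l,
  map_ctx f l (compose C1 C2) = compose (map_ctx f l C1) (map_ctx f (l + depth C1) C2).
Proof.
  induction C1; intros; simpl.
  - rewrite Nat.add_0_r; reflexivity.
  - f_equal; auto.
  - f_equal; auto.
  - rewrite IHC1. replace (l + S (depth C1)) with (S l + depth C1) by lia. reflexivity.
Qed.

Lemma map_need_body : forall Ad E l,
  f (S l) (plug Ad (plug E (Var (depth E + depth Ad)))) =
  plug (map_ctx f (S l) Ad) (plug (map_ctx f (S l + depth Ad) E)
     (Var (depth (map_ctx f (S l + depth Ad) E) + depth (map_ctx f (S l) Ad)))).
Proof.
  destruct f_structural as [_ [_ HV]]. intros.
  rewrite !map_plug, !depth_map_ctx, HV by lia. reflexivity.
Qed.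

Lemma map_lam_need : forall Ad E l,
  f l (lam_need Ad E) = lam_need (map_ctx f (S l) Ad) (map_ctx f (S l + depth Ad) E).
Proof.
  destruct f_structural as [HL _]. intros.
  unfold lam_need. rewrite HL, map_need_body. reflexivity.
Qed.

Lemma map_redex : forall Au A1 Ad E A2 v c,
  f c (redex Au A1 Ad E A2 v) =
  redex (map_ctx f c Au) (map_ctx f (c + depth Au) A1)
        (map_ctx f (S (c + depth Au + depth A1)) Ad)
        (map_ctx f (S (c + depth Au + depth A1) + depth Ad) E)
        (map_ctx f (c + depth Au) A2) (f (c + depth Au + depth A2) v).
Proof.
  destruct f_structural as [_ [HA _]]. intros. unfold redex.
  rewrite map_plug, HA, !map_plug, map_lam_need. reflexivity.
Qed.

End StructuralMap.

Lemma map_ctx_shift_shift : forall A d k c j,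
  map_ctx (shift d) (c + k + j) (map_ctx (shift k) j A) =
  map_ctx (shift k) j (map_ctx (shift d) (c + j) A).
Proof.
  induction A; intros; simpl; f_equal; auto;
  try (rewrite (shift_shift_comm t k d (c + j) j) by lia; f_equal; lia).
  replace (S (c + k + j)) with (c + k + S j) by lia.
  replace (S (c + j)) with (c + S j) by lia. auto.
Qed.

Lemma map_ctx_subst_shift : forall A u k c j,
  map_ctx (fun i => subst i u) (c + k + j) (map_ctx (shift k) j A) =
  map_ctx (shift k) j (map_ctx (fun i => subst i u) (c + j) A).
Proof.
  induction A; intros; simpl; f_equal; auto;
  try (rewrite (shift_subst_below t k j (c + j) u) by lia; f_equal; lia).
  replace (S (c + k + j)) with (c + k + S j) by lia.
  replace (S (c + j)) with (c + S j) by lia. auto.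
Qed.

Definition map_contractum_law (f : nat -> term -> term) : Prop :=
  forall Au A1 Ad E A2 v c,
  f c (contractum Au A1 Ad E A2 v) =
  contractum (map_ctx f c Au) (map_ctx f (c + depth Au) A1)
        (map_ctx f (S (c + depth Au + depth A1)) Ad)
        (map_ctx f (S (c + depth Au + depth A1) + depth Ad) E)
        (map_ctx f (c + depth Au) A2) (f (c + depth Au + depth A2) v).

Lemma shift_contractum : forall d, map_contractum_law (shift d).
Proof.
  intros d Au A1 Ad E A2 v c. pose proof (shift_structural d) as Hf.
  unfold contractum. rewrite !depth_map_ctx, !map_plug by auto.
  rewrite !shift_ctx_map_ctx, depth_map_ctx.
  pose proof (map_ctx_shift_shift A2 d (depth A1) (c + depth Au) 0) as HP.
  rewrite !Nat.add_0_r in HP. rewrite HP.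
  do 3 f_equal.
  rewrite shift_subst_above, Nat.sub_0_r by lia. f_equal.
  - rewrite (shift_shift_comm v (depth A1) d (c + depth Au + depth A2) (depth A2)) by lia.
    f_equal. lia.
  - replace (S (c + depth Au + depth A1 + depth A2))
      with (depth A2 + S (c + depth Au + depth A1)) by lia.
    rewrite <- shift_shift_comm by lia. f_equal.
    rewrite map_need_body by auto. rewrite !depth_map_ctx. reflexivity.
Qed.

Lemma subst_contractum : forall u, map_contractum_law (fun k => subst k u).
Proof.
  intros u Au A1 Ad E A2 v c. pose proof (subst_structural u) as Hf.
  unfold contractum. rewrite !depth_map_ctx.
  rewrite (map_plug _ Hf), (map_plug _ Hf), (map_plug _ Hf).
  rewrite !shift_ctx_map_ctx, depth_map_ctx.
  pose proof (map_ctx_subst_shift A2 u (depth A1) (c + depth Au) 0) as HP.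
  rewrite !Nat.add_0_r in HP. rewrite HP.
  do 3 f_equal.
  pose proof (subst_subst (shift (depth A2) 1 (plug Ad (plug E (Var (depth E + depth Ad)))))
    (shift (depth A1) (depth A2) v) u (c + depth Au + depth A1 + depth A2) 0) as HS.
  rewrite Nat.add_0_r in HS. rewrite HS. f_equal.
  - rewrite (shift_subst_below v (depth A1) (depth A2) (c + depth Au + depth A2) u) by lia.
    f_equal. lia.
  - replace (S (c + depth Au + depth A1 + depth A2))
      with (depth A2 + S (c + depth Au + depth A1)) by lia.
    rewrite <- shift_subst_below by lia. f_equal.
    rewrite (map_need_body _ Hf), !depth_map_ctx. reflexivity.
Qed.

(** * Answer and evaluation contexts *)

(* The sequence of constructors on the path to the hole; the classes of
   contexts depend on nothing else. *)
Fixpoint shape (C : ctx) : list nat :=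
  match C with
  | Hole => []
  | CAppL C _ => 0 :: shape C
  | CAppR _ C => 1 :: shape C
  | CLam C => 2 :: shape C
  end.

Lemma shape_compose : forall C1 C2, shape (compose C1 C2) = shape C1 ++ shape C2.
Proof. induction C1; intros; simpl; f_equal; auto. Qed.

Lemma shape_map_ctx : forall f C l, shape (map_ctx f l C) = shape C.
Proof. induction C; intros; simpl; f_equal; auto. Qed.

Lemma shape_app_inv : forall C k1 k2, shape C = k1 ++ k2 ->
  exists X Y, C = compose X Y /\ shape X = k1 /\ shape Y = k2.
Proof.
  induction C; intros k1 k2 H; destruct k1 as [|x k1]; simpl in *.
  - exists Hole, Hole; auto.
  - discriminate.
  - exists Hole, (CAppL C t); auto.
  - injection H as <- H. destruct (IHC _ _ H) as (X & Y & -> & H1 & H2).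
    exists (CAppL X t), Y; simpl; subst; auto.
  - exists Hole, (CAppR t C); auto.
  - injection H as <- H. destruct (IHC _ _ H) as (X & Y & -> & H1 & H2).
    exists (CAppR t X), Y; simpl; subst; auto.
  - exists Hole, (CLam C); auto.
  - injection H as <- H. destruct (IHC _ _ H) as (X & Y & -> & H1 & H2).
    exists (CLam X), Y; simpl; subst; auto.
Qed.

Lemma shape_nil_inv : forall C, shape C = [] -> C = Hole.
Proof. destruct C; simpl; congruence. Qed.

Lemma shape_appl_inv : forall C k, shape C = 0 :: k ->
  exists C' e, C = CAppL C' e /\ shape C' = k.
Proof. destruct C; simpl; intros; try discriminate. injection H as H. eauto. Qed.

Lemma shape_lam_inv : forall C k, shape C = 2 :: k -> exists C', C = CLam C' /\ shape C' = k.
Proof. destruct C; simpl; intros; try discriminate. injection H as H. eauto. Qed.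

Lemma isA_shape : forall C, isA C -> forall C', shape C' = shape C -> isA C'.
Proof.
  induction 1; intros C' HK.
  - apply shape_nil_inv in HK. subst. constructor.
  - simpl in HK. rewrite shape_compose in HK. simpl in HK.
    destruct (shape_appl_inv _ _ HK) as (X & e' & -> & HX).
    destruct (shape_app_inv _ _ _ HX) as (X1 & Y & -> & H1 & H2).
    destruct (shape_lam_inv _ _ H2) as (Y' & -> & H3).
    constructor; auto.
Qed.

Lemma isAup_shape : forall C, isAup C -> forall C', shape C' = shape C -> isAup C'.
Proof.
  induction 1; intros C' HK.
  - apply shape_nil_inv in HK. subst. constructor.
  - simpl in HK. rewrite shape_compose in HK.
    destruct (shape_appl_inv _ _ HK) as (X & e' & -> & HX).
    destruct (shape_app_inv _ _ _ HX) as (X1 & Y & -> & H1 & H2).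
    constructor; eauto using isA_shape.
Qed.

Lemma isAdown_shape : forall C, isAdown C -> forall C', shape C' = shape C -> isAdown C'.
Proof.
  induction 1; intros C' HK.
  - apply shape_nil_inv in HK. subst. constructor.
  - rewrite shape_compose in HK. simpl in HK.
    destruct (shape_app_inv _ _ _ HK) as (X1 & Y & -> & H1 & H2).
    destruct (shape_lam_inv _ _ H2) as (Y' & -> & H3).
    constructor; eauto using isA_shape.
Qed.

Lemma isA_compose : forall X Y, isA X -> isA Y -> isA (compose X Y).
Proof.
  induction 1; intros HY; simpl; auto.
  rewrite compose_assoc. simpl. constructor; auto.
Qed.

Lemma isA_isE : forall A, isA A -> isE A.
Proof. intros. rewrite <- (compose_hole_r A). apply isE_ans; auto; constructor. Qed.

Lemma isE_compose : forall E1, isE E1 -> forall E2, isE E2 -> isE (compose E1 E2).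
Proof.
  induction 1; intros; simpl; auto.
  - constructor; auto.
  - rewrite compose_assoc. apply isE_ans; auto.
  - rewrite compose_assoc. simpl. apply isE_need; auto.
Qed.

Lemma isE_map_ctx : forall f, structural f -> forall C, isE C -> forall l, isE (map_ctx f l C).
Proof.
  intros f Hf C HC. induction HC; intros l; simpl.
  - constructor.
  - constructor; auto.
  - rewrite map_ctx_compose by auto. apply isE_ans; auto.
    eapply isA_shape; eauto. apply shape_map_ctx.
  - rewrite map_ctx_compose by auto. simpl. rewrite map_plug, map_lam_need by auto.
    apply isE_need; auto.
    + eapply isAup_shape; [exact H|]; apply shape_map_ctx.
    + eapply isA_shape; [exact H0|]; apply shape_map_ctx.
    + eapply isAdown_shape; [exact H1|]; apply shape_map_ctx.
    + eapply isA_shape; [exact H2|]. rewrite !shape_compose, !shape_map_ctx. reflexivity.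
Qed.

Lemma beta_need_map : forall f, structural f -> map_contractum_law f ->
  forall t t', beta_need t t' -> forall c, beta_need (f c t) (f c t').
Proof.
  intros f Hf Hc t t' H c. destruct H.
  rewrite map_redex, Hc by auto. apply beta_need_intro.
  - eapply isAup_shape; [exact H|]; apply shape_map_ctx.
  - eapply isA_shape; [exact H0|]; apply shape_map_ctx.
  - eapply isAdown_shape; [exact H1|]; apply shape_map_ctx.
  - apply isE_map_ctx; auto.
  - eapply isA_shape; [exact H3|]; apply shape_map_ctx.
  - destruct H4 as [b ->]. destruct Hf as [HL _]. rewrite HL. eexists; eauto.
  - eapply isA_shape; [exact H5|]. rewrite !shape_compose, !shape_map_ctx. reflexivity.
Qed.

Lemma beta_need_shift : forall t t', beta_need t t' -> forall d c,
  beta_need (shift d c t) (shift d c t').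
Proof. intros. apply (beta_need_map (shift d)); auto using shift_structural, shift_contractum. Qed.

Lemma beta_need_subst : forall t t', beta_need t t' -> forall u c,
  beta_need (subst c u t) (subst c u t').
Proof.
  intros. apply (beta_need_map (fun k => subst k u)); auto using subst_structural, subst_contractum.
Qed.

(* An answer context has as many [CAppL] nodes as binders on its path; an outer
   partial one has at most as many binders, an inner partial one at most as
   many [CAppL] nodes. *)
Fixpoint napp (C : ctx) : nat :=
  match C with
  | Hole => 0 | CAppL C _ => S (napp C) | CAppR _ C => napp C | CLam C => napp C
  end.

Fixpoint nlam (C : ctx) : nat :=
  match C with
  | Hole => 0 | CAppL C _ => nlam C | CAppR _ C => nlam C | CLam C => S (nlam C)
  end.

Lemma napp_compose : forall A B, napp (compose A B) = napp A + napp B.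
Proof. induction A; intros; simpl; auto. Qed.

Lemma nlam_compose : forall A B, nlam (compose A B) = nlam A + nlam B.
Proof. induction A; intros; simpl; auto; rewrite IHA; auto. Qed.

Lemma isA_balanced : forall A, isA A -> napp A = nlam A.
Proof. induction 1; simpl; auto. rewrite napp_compose, nlam_compose. simpl. lia. Qed.

Lemma isAup_nlam_le : forall A, isAup A -> nlam A <= napp A.
Proof.
  induction 1; simpl; auto. rewrite napp_compose, nlam_compose.
  apply isA_balanced in H. lia.
Qed.

Lemma isAdown_napp_le : forall A, isAdown A -> napp A <= nlam A.
Proof.
  induction 1; simpl; auto. rewrite napp_compose, nlam_compose.
  apply isA_balanced in H. simpl. lia.
Qed.

Lemma isAdown_balanced : forall Ad, isAdown Ad -> napp Ad = nlam Ad -> Ad = Hole.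
Proof.
  induction 1; intros; auto. rewrite napp_compose, nlam_compose in H1. simpl in H1.
  apply isA_balanced in H. apply isAdown_napp_le in H0. lia.
Qed.

Lemma isAdown_snoc : forall Ad, isAdown Ad -> Ad <> Hole ->
  exists Ad' A, isAdown Ad' /\ isA A /\ Ad = compose Ad' (compose A (CLam Hole)).
Proof.
  induction 1 as [|A Ad HA HAd IH]; intros Hne; [congruence|].
  assert (Ad = Hole \/ Ad <> Hole) as [->|Hn] by (destruct Ad; [left|right..]; congruence).
  - exists Hole, A. repeat split; auto; constructor.
  - destruct (IH Hn) as (Ad' & A'' & H1 & H2 & ->).
    exists (compose A (CLam Ad')), A''. repeat split; auto.
    + constructor; auto.
    + rewrite compose_assoc. reflexivity.
Qed.

(* [Au[X[Ad]]] stays an answer context for every answer context [X] as long as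
   [Au] and [Ad] balance: each binder of [Ad] is matched by an application of
   [Au], peeled off from the outside in. *)
Lemma isA_compose_between : forall Au, isAup Au -> forall Ad, isAdown Ad ->
  napp Au + napp Ad = nlam Au + nlam Ad -> forall X, isA X -> isA (compose Au (compose X Ad)).
Proof.
  induction 1 as [|A Au e HA HAu IH]; intros Ad HAd Hc X HX.
  - simpl in Hc. rewrite (isAdown_balanced Ad HAd ltac:(lia)). simpl.
    now rewrite compose_hole_r.
  - assert (Hne : Ad <> Hole).
    { intros ->. simpl in Hc. rewrite napp_compose, nlam_compose in Hc.
      apply isA_balanced in HA. apply isAup_nlam_le in HAu. lia. }
    destruct (isAdown_snoc Ad HAd Hne) as (Ad' & A'' & H1 & H2 & ->).
    simpl in Hc. rewrite !napp_compose, !nlam_compose in Hc. simpl in Hc.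
    pose proof (isA_balanced _ HA). pose proof (isA_balanced _ H2).
    assert (HY : isA (compose Au (compose X Ad'))) by (apply IH; auto; lia).
    simpl. rewrite !compose_assoc.
    replace (compose A (compose Au (compose X (compose Ad' (compose A'' (CLam Hole))))))
      with (compose (compose A (compose (compose Au (compose X Ad')) A'')) (CLam Hole))
      by (rewrite !compose_assoc; reflexivity).
    constructor; [|constructor]. apply isA_compose; auto. apply isA_compose; auto.
Qed.

Lemma isA_need_frame : forall Au Ad A g, isAup Au -> isAdown Ad ->
  isA (compose Au Ad) -> isA A -> isA (compose Au (CAppL (compose A (CLam Ad)) g)).
Proof.
  intros Au Ad A g HAu HAd HAA HA. pose proof (isA_balanced _ HAA) as Hc.
  rewrite napp_compose, nlam_compose in Hc.
  pose proof (isA_compose_between Au HAu Ad HAd ltac:(lia)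
                (CAppL (compose A (CLam Hole)) g)) as H.
  simpl in H. rewrite compose_assoc in H. simpl in H. apply H.
  constructor; auto. constructor.
Qed.

Lemma isA_prefix : forall C, isA C -> forall X Y, C = compose X Y -> isE X.
Proof.
  induction 1 as [|A1 A2 e H1 IH1 H2 IH2]; intros X Y HC.
  - destruct X; simpl in HC; try discriminate. constructor.
  - destruct X; simpl in HC; try discriminate. constructor.
    injection HC as HC <-.
    destruct (compose_eq_inv _ _ _ _ HC) as [(Z&->&HZ)|(Z&->&HZ)].
    + destruct Z; simpl in HZ; try discriminate.
      * rewrite compose_hole_r. constructor. eapply IH1. symmetry. apply compose_hole_r.
      * injection HZ as HZ.
        replace (CAppL (compose A1 (CLam Z)) e) with
          (compose (CAppL (compose A1 (CLam Hole)) e) Z)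
          by (simpl; rewrite compose_assoc; reflexivity).
        apply isE_ans. constructor; auto; constructor. eapply IH2; eauto.
    + constructor. eapply IH1; eauto.
Qed.

Lemma isAup_prefix : forall C, isAup C -> forall X Y, C = compose X Y -> isE X.
Proof.
  induction 1 as [|A Au e HA HAu IH]; intros X Y HC.
  - destruct X; simpl in HC; try discriminate. constructor.
  - destruct X; simpl in HC; try discriminate. constructor.
    injection HC as HC <-. constructor.
    destruct (compose_eq_inv _ _ _ _ HC) as [(Z&->&HZ)|(Z&->&HZ)].
    + apply isE_ans; auto. eapply IH; eauto.
    + eapply isA_prefix; eauto.
Qed.

Lemma isE_prefix : forall C, isE C -> forall X Y, C = compose X Y -> isE X.
Proof.
  induction 1; intros X Y HC.
  - destruct X; simpl in HC; try discriminate. constructor.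
  - destruct X; simpl in HC; try discriminate. constructor.
    injection HC as HC <-. constructor. eauto.
  - destruct (compose_eq_inv _ _ _ _ HC) as [(Z&->&HZ)|(Z&->&HZ)].
    + apply isE_ans; eauto.
    + eapply isA_prefix; eauto.
  - destruct (compose_eq_inv _ _ _ _ HC) as [(Z&->&HZ)|(Z&->&HZ)].
    + destruct Z; simpl in HZ; try discriminate.
      * rewrite compose_hole_r. eapply isAup_prefix; eauto. symmetry; apply compose_hole_r.
      * injection HZ as <- HZ. apply isE_need; eauto.
    + eapply isAup_prefix; eauto.
Qed.

Lemma isE_plug_Lam : forall E s b, isE E -> plug E s = Lam b -> E = Hole.
Proof.
  intros E s b HE. assert (Hroot : E = Hole \/ exists E' e, E = CAppL E' e \/ E = CAppR e E').
  { induction HE as [| |A E0 HA _ IH|Au A Ad E1 E2 HAu _ _ _ _ _ _ _]; eauto.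
    - destruct HA; simpl; eauto.
    - destruct HAu; simpl; eauto. }
  destruct Hroot as [->|(E' & e & [->| ->])]; auto; discriminate.
Qed.

(** * Parallel reduction with root contractions *)

Inductive rpr : nat -> term -> term -> Prop :=
| rpr_refl : forall t, rpr 0 t t
| rpr_app : forall n1 n2 a b a' b', rpr n1 a a' -> rpr n2 b b' ->
    rpr (n1 + n2) (App a b) (App a' b')
| rpr_lam : forall n a a', rpr n a a' -> rpr n (Lam a) (Lam a')
| rpr_beta : forall n t c u, beta_need t c -> rpr n c u -> rpr (S n) t u.

Definition rprs (t u : term) : Prop := exists n, rpr n t u.

Inductive rpr_ctx : ctx -> ctx -> Prop :=
| rpr_ctx_hole : rpr_ctx Hole Hole
| rpr_ctx_appl : forall C C' e e', rpr_ctx C C' -> rprs e e' ->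
    rpr_ctx (CAppL C e) (CAppL C' e')
| rpr_ctx_appr : forall C C' e e', rpr_ctx C C' -> rprs e e' ->
    rpr_ctx (CAppR e C) (CAppR e' C')
| rpr_ctx_lam : forall C C', rpr_ctx C C' -> rpr_ctx (CLam C) (CLam C').

Lemma rpr_rprs : forall n a b, rpr n a b -> rprs a b.
Proof. intros; eexists; eauto. Qed.

Lemma rprs_refl : forall t, rprs t t.
Proof. intros; exists 0; constructor. Qed.

Lemma rprs_app : forall a b a' b', rprs a a' -> rprs b b' -> rprs (App a b) (App a' b').
Proof. intros a b a' b' [n1 H1] [n2 H2]. eexists; constructor; eauto. Qed.

Lemma rprs_lam : forall a a', rprs a a' -> rprs (Lam a) (Lam a').
Proof. intros a a' [n H]. eexists; constructor; eauto. Qed.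

Lemma rprs_beta : forall t c u, beta_need t c -> rprs c u -> rprs t u.
Proof. intros t c u H [n H1]. eexists; eapply rpr_beta; eauto. Qed.

Lemma rpr_ctx_refl : forall C, rpr_ctx C C.
Proof. induction C; constructor; auto using rprs_refl. Qed.

Lemma rpr_ctx_compose : forall A A', rpr_ctx A A' -> forall B B', rpr_ctx B B' ->
  rpr_ctx (compose A B) (compose A' B').
Proof. induction 1; intros; simpl; try constructor; auto. Qed.

Lemma rpr_ctx_depth : forall C C', rpr_ctx C C' -> depth C = depth C'.
Proof. induction 1; simpl; auto. Qed.

Lemma rpr_ctx_shape : forall C C', rpr_ctx C C' -> shape C = shape C'.
Proof. induction 1; simpl; f_equal; auto. Qed.

Lemma rpr_ctx_plug : forall C C', rpr_ctx C C' -> forall s s', rprs s s' ->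
  rprs (plug C s) (plug C' s').
Proof. induction 1; intros; simpl; auto using rprs_app, rprs_lam. Qed.

Lemma rpr_ctx_map_ctx : forall f, (forall l a b, rprs a b -> rprs (f l a) (f l b)) ->
  forall C C', rpr_ctx C C' -> forall l, rpr_ctx (map_ctx f l C) (map_ctx f l C').
Proof. intros f Hf. induction 1; intros; simpl; constructor; auto. Qed.

Lemma rpr_ctx_isA : forall C C', rpr_ctx C C' -> isA C' -> isA C.
Proof. intros. eapply isA_shape; [eassumption|]. apply rpr_ctx_shape; auto. Qed.

Lemma rpr_ctx_isAup : forall C C', rpr_ctx C C' -> isAup C' -> isAup C.
Proof. intros. eapply isAup_shape; [eassumption|]. apply rpr_ctx_shape; auto. Qed.

Lemma rpr_ctx_isAdown : forall C C', rpr_ctx C C' -> isAdown C' -> isAdown C.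
Proof. intros. eapply isAdown_shape; [eassumption|]. apply rpr_ctx_shape; auto. Qed.

Lemma rprs_lam_need : forall Ad Ad' E E', rpr_ctx Ad Ad' -> rpr_ctx E E' ->
  rprs (lam_need Ad E) (lam_need Ad' E').
Proof.
  intros. unfold lam_need. apply rprs_lam. apply rpr_ctx_plug; auto. apply rpr_ctx_plug; auto.
  rewrite (rpr_ctx_depth _ _ H), (rpr_ctx_depth _ _ H0). apply rprs_refl.
Qed.

Lemma rpr_shift : forall n t u, rpr n t u -> forall d c, rpr n (shift d c t) (shift d c u).
Proof.
  induction 1; intros; simpl.
  - constructor.
  - constructor; auto.
  - constructor; auto.
  - eapply rpr_beta; eauto. apply beta_need_shift; auto.
Qed.

Lemma rprs_shift : forall t u d c, rprs t u -> rprs (shift d c t) (shift d c u).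
Proof. intros t u d c [n H]. exists n. apply rpr_shift; auto. Qed.

Lemma rprs_subst_r : forall t w w' k, rprs w w' -> rprs (subst k w t) (subst k w' t).
Proof.
  induction t; intros; simpl.
  - destruct (n =? k). apply rprs_shift; auto. destruct (k <? n); apply rprs_refl.
  - apply rprs_lam; auto.
  - apply rprs_app; auto.
Qed.

Lemma rprs_subst : forall t u w w' k, rprs t u -> rprs w w' ->
  rprs (subst k w t) (subst k w' u).
Proof.
  intros t u w w' k [n H]. revert w w' k. induction H; intros; simpl.
  - apply rprs_subst_r; auto.
  - apply rprs_app; auto.
  - apply rprs_lam; auto.
  - eapply rprs_beta; [apply beta_need_subst; eauto | auto].
Qed.

Lemma rprs_contractum : forall Au A1 Ad E A2 v Au' A1' Ad' E' A2' v',
  rpr_ctx Au Au' -> rpr_ctx A1 A1' -> rpr_ctx Ad Ad' -> rpr_ctx E E' -> rpr_ctx A2 A2' ->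
  rprs v v' -> rprs (contractum Au A1 Ad E A2 v) (contractum Au' A1' Ad' E' A2' v').
Proof.
  intros. unfold contractum.
  rewrite (rpr_ctx_depth _ _ H0), (rpr_ctx_depth _ _ H3), (rpr_ctx_depth _ _ H1),
    (rpr_ctx_depth _ _ H2).
  apply rpr_ctx_plug; auto. apply rpr_ctx_plug; auto. apply rpr_ctx_plug.
  - rewrite !shift_ctx_map_ctx. apply rpr_ctx_map_ctx; auto. intros; apply rprs_shift; auto.
  - apply rprs_subst.
    + apply rprs_shift. apply rpr_ctx_plug; auto. apply rpr_ctx_plug; auto. apply rprs_refl.
    + apply rprs_shift; auto.
Qed.

Scheme pr_mut := Induction for pr Sort Prop
with pr_ctx_mut := Induction for pr_ctx Sort Prop.

Lemma pr_rprs : forall t u, pr t u -> rprs t u.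
Proof.
  apply (pr_mut (fun t u _ => rprs t u) (fun C C' _ => rpr_ctx C C')); intros.
  - apply rprs_refl.
  - eapply rprs_beta; [apply beta_need_intro; eauto|]. apply rprs_contractum; auto.
  - apply rprs_app; auto.
  - apply rprs_lam; auto.
  - constructor.
  - constructor; auto. apply rpr_ctx_compose; auto. constructor; auto.
  - constructor; auto. apply rpr_ctx_compose; auto.
  - apply rpr_ctx_compose; auto. constructor; auto.
  - constructor; auto.
  - apply rpr_ctx_compose; auto.
  - apply rpr_ctx_compose; auto. constructor; auto.
    apply rpr_ctx_plug; auto. apply rprs_lam_need; auto.
Qed.

Inductive std_star : term -> term -> Prop :=
| std_star_refl : forall t, std_star t t
| std_star_step : forall a b c, std_step a b -> std_star b c -> std_star a c.

Lemma std_star_trans : forall a b c, std_star a b -> std_star b c -> std_star a c.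
Proof. induction 1; intros; auto. econstructor; eauto. Qed.

Lemma std_step_plug : forall O x y, isE O -> std_step x y -> std_step (plug O x) (plug O y).
Proof.
  intros O x y HO H. destruct H. rewrite <- !plug_compose. constructor; auto.
  apply isE_compose; auto.
Qed.

Lemma beta_need_std_step : forall t c, beta_need t c -> std_step t c.
Proof.
  intros. change (std_step (plug Hole t) (plug Hole c)). constructor; auto. constructor.
Qed.

Lemma std_star_root_beta : forall O t c u, isE O -> beta_need t c ->
  std_star (plug O c) u -> std_star (plug O t) u.
Proof.
  intros. econstructor; [|eassumption]. apply std_step_plug; auto.
  apply beta_need_std_step; auto.
Qed.

Lemma rpr_Lam_std_star : forall n t u, rpr n t u -> forall b, u = Lam b -> forall O, isE O ->
  exists b' m, std_star (plug O t) (plug O (Lam b')) /\ rpr m b' b /\ m <= n.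
Proof.
  induction 1; intros bb Hu O HO; subst; try discriminate.
  - exists bb, 0. split; [constructor|split; [constructor|lia]].
  - injection Hu as ->. exists a, n. split; [constructor|auto].
  - destruct (IHrpr bb eq_refl O HO) as (b' & m & H1 & H2 & H3).
    exists b', m. split; [eapply std_star_root_beta; eauto | split; [auto | lia]].
Qed.

Lemma rpr_Var_std_star : forall n t u, rpr n t u -> forall k, u = Var k -> forall O, isE O ->
  std_star (plug O t) (plug O (Var k)).
Proof.
  induction 1; intros k Hu O HO; subst; try discriminate.
  - constructor.
  - eapply std_star_root_beta; eauto.
Qed.

(** * Postponement of parallel reduction after standard steps *)

(* The outer frame [O] stays an evaluation context when the need redex
   (resp. the inner answer context) below it is replaced by any context of the
   same shape; [rpr_ctx] preserves shapes, so this survives tracing back. *)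
Definition need_frame (O Au Ad : ctx) : Prop :=
  forall Au2 Ad2 A2 g E2, shape Au2 = shape Au -> shape Ad2 = shape Ad -> isA A2 -> isE E2 ->
  isE (compose O (compose Au2 (CAppL (compose A2 (CLam (compose Ad2 E2))) g))).

Definition lam_frame (O Ad : ctx) : Prop :=
  forall Ad2 E2, shape Ad2 = shape Ad -> isE E2 -> isE (compose O (compose Ad2 E2)).

Lemma need_frame_intro : forall O Au Ad, isE O -> isAup Au -> isAdown Ad ->
  isA (compose Au Ad) -> need_frame O Au Ad.
Proof.
  intros O Au Ad HO HAu HAd HA Au2 Ad2 A2 g E2 K1 K2 HA2 HE2.
  apply isE_compose; auto.
  assert (HAu2 : isAup Au2) by (eapply isAup_shape; eauto).
  assert (HAd2 : isAdown Ad2) by (eapply isAdown_shape; eauto).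
  assert (HA' : isA (compose Au2 Ad2)).
  { eapply isA_shape; [exact HA|]. rewrite !shape_compose. congruence. }
  replace (compose Au2 (CAppL (compose A2 (CLam (compose Ad2 E2))) g))
    with (compose (compose Au2 (CAppL (compose A2 (CLam Ad2)) g)) E2)
    by (rewrite compose_assoc; simpl; rewrite compose_assoc; reflexivity).
  apply isE_ans; auto. apply isA_need_frame; auto.
Qed.

(* Tracing a decomposition of [u] back into [t]: the standard steps take place
   under an evaluation frame [O], and the remaining piece is reached with at
   most [n] root contractions, which drives the induction. *)
Definition lifted_need (n : nat) (O : ctx) (t : term) (Au A Ad E1 : ctx) (s : term) : Prop :=
  exists Au' A' Ad' E1' s' m,
    std_star (plug O t) (plug O (plug Au' (App (plug A' (lam_need Ad' E1')) s'))) /\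
    rpr_ctx Au' Au /\ rpr_ctx A' A /\ rpr_ctx Ad' Ad /\ rpr_ctx E1' E1 /\ isE E1' /\
    rpr m s' s /\ m <= n.

Definition lifted_eval (n : nat) (O : ctx) (t : term) (E : ctx) (s : term) : Prop :=
  exists E' s' m, std_star (plug O t) (plug O (plug E' s')) /\ isE E' /\ rpr_ctx E' E /\
    rpr m s' s /\ m <= n.

Definition lifted_inner (n : nat) (O : ctx) (t : term) (Ad : ctx) (X : term) : Prop :=
  exists Ad' X' m, std_star (plug O t) (plug O (plug Ad' X')) /\ rpr_ctx Ad' Ad /\
    rpr m X' X /\ m <= n.

Definition lift_need (n : nat) (t u : term) : Prop :=
  forall O Au A Ad E1 s, isE O -> isAup Au -> isA A -> isAdown Ad -> isE E1 ->
  need_frame O Au Ad -> u = plug Au (App (plug A (lam_need Ad E1)) s) -> rpr n t u ->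
  lifted_need n O t Au A Ad E1 s.

Definition lift_eval (n : nat) (t u : term) : Prop :=
  forall O E s, isE O -> isE E -> u = plug E s -> rpr n t u -> lifted_eval n O t E s.

Definition lift_inner (n : nat) (t u : term) : Prop :=
  forall O Ad X, isAdown Ad -> lam_frame O Ad -> u = plug Ad X -> rpr n t u ->
  lifted_inner n O t Ad X.

Definition lifts (n : nat) (t u : term) : Prop :=
  lift_need n t u /\ lift_eval n t u /\ lift_inner n t u.

Lemma lifted_need_beta : forall n O t c Au A Ad E1 s, isE O -> beta_need t c ->
  lifted_need n O c Au A Ad E1 s -> lifted_need (S n) O t Au A Ad E1 s.
Proof.
  intros n O t c Au A Ad E1 s HO Hb (Au' & A' & Ad' & E1' & s' & m & HS & H1 & H2 & H3 & H4 & H5 & H6 & Hm).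
  exists Au', A', Ad', E1', s', m. split; [eapply std_star_root_beta; eauto|].
  repeat split; auto.
Qed.

Lemma lifted_eval_beta : forall n O t c E s, isE O -> beta_need t c ->
  lifted_eval n O c E s -> lifted_eval (S n) O t E s.
Proof.
  intros n O t c E s HO Hb (E' & s' & m & HS & H1 & H2 & H3 & Hm).
  exists E', s', m. split; [eapply std_star_root_beta; eauto|].
  repeat split; auto.
Qed.

Fixpoint term_size (t : term) : nat :=
  match t with Var _ => 1 | Lam b => S (term_size b) | App a b => S (term_size a + term_size b) end.

Lemma term_size_plug : forall C s, term_size s <= term_size (plug C s).
Proof. induction C; intros; simpl; auto; specialize (IHC s); lia. Qed.

Ltac plug_simpl := do 3 (repeat rewrite plug_compose in *; simpl in *).

Section Lifting.

Variables (n : nat) (u : term).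
Hypothesis IH_count : forall n', n' < n -> forall t' u', lifts n' t' u'.
Hypothesis IH_size : forall n' t' u', n' <= n -> term_size u' < term_size u -> lifts n' t' u'.

Lemma lift_need_body : forall O Ad E1 b1 m,
  m <= n -> term_size (plug Ad (plug E1 (Var (depth E1 + depth Ad)))) < term_size u ->
  isAdown Ad -> isE E1 -> lam_frame O Ad ->
  rpr m b1 (plug Ad (plug E1 (Var (depth E1 + depth Ad)))) ->
  exists Ad0 E10,
    std_star (plug O b1) (plug O (plug Ad0 (plug E10 (Var (depth E10 + depth Ad0))))) /\
    rpr_ctx Ad0 Ad /\ rpr_ctx E10 E1 /\ isE E10.
Proof.
  intros O Ad E1 b1 m Hm Hsize HAd HE1 HO Hb1.
  destruct (IH_size m b1 _ Hm Hsize) as [_ [_ Hinner]].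
  destruct (Hinner O Ad _ HAd HO eq_refl Hb1) as (Ad0 & X & m' & S1 & FAd0 & HX & Hm').
  assert (HO' : isE (compose O Ad0)).
  { pose proof (HO Ad0 Hole (rpr_ctx_shape _ _ FAd0) isE_hole) as H.
    rewrite compose_hole_r in H. exact H. }
  assert (Hsize' : term_size (plug E1 (Var (depth E1 + depth Ad))) < term_size u).
  { pose proof (term_size_plug Ad (plug E1 (Var (depth E1 + depth Ad)))). lia. }
  destruct (IH_size m' X _ ltac:(lia) Hsize') as [_ [Heval _]].
  destruct (Heval _ E1 _ HO' HE1 eq_refl HX) as (E10 & s & m'' & S2 & HE10 & FE10 & Hs & _).
  assert (HO'' : isE (compose (compose O Ad0) E10)).
  { rewrite compose_assoc. exact (HO Ad0 E10 (rpr_ctx_shape _ _ FAd0) HE10). }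
  pose proof (rpr_Var_std_star _ _ _ Hs _ eq_refl _ HO'') as S3.
  exists Ad0, E10. repeat split; auto.
  rewrite (rpr_ctx_depth _ _ FAd0), (rpr_ctx_depth _ _ FE10).
  plug_simpl. eapply std_star_trans; [exact S1|]. eapply std_star_trans; [exact S2|]. exact S3.
Qed.

Lemma lift_need_root : forall O A Ad E1 s a b n1 n2,
  u = App (plug A (lam_need Ad E1)) s -> n1 + n2 = n ->
  isE O -> isA A -> isAdown Ad -> isE E1 -> need_frame O Hole Ad ->
  rpr n1 a (plug A (lam_need Ad E1)) -> rpr n2 b s ->
  lifted_need n O (App a b) Hole A Ad E1 s.
Proof.
  intros O A Ad E1 s a b n1 n2 Hu Hn HO HA HAd HE1 HNd Ha Hb.
  assert (HO1 : isE (compose O (CAppL Hole b))).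
  { eapply isE_prefix; [exact (HNd Hole Ad Hole b Hole eq_refl eq_refl isA_hole isE_hole)|].
    rewrite compose_assoc. reflexivity. }
  destruct (IH_size n1 a (plug A (lam_need Ad E1)) ltac:(lia) ltac:(subst u; simpl; lia))
    as [_ [Heval _]].
  destruct (Heval _ A _ HO1 (isA_isE _ HA) eq_refl Ha) as (A0 & s1 & m1 & S1 & _ & FA0 & Hs1 & Hm1).
  assert (HA0 : isA A0) by (eapply rpr_ctx_isA; eauto).
  assert (HO2 : isE (compose O (CAppL A0 b))).
  { eapply isE_prefix; [exact (HNd Hole Ad A0 b Hole eq_refl eq_refl HA0 isE_hole)|].
    rewrite compose_assoc. reflexivity. }
  destruct (rpr_Lam_std_star _ _ _ Hs1 _ eq_refl _ HO2) as (b1 & m2 & S2 & Hb1 & Hm2).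
  assert (HO3 : lam_frame (compose O (CAppL (compose A0 (CLam Hole)) b)) Ad).
  { intros Ad2 E2 K HE2. rewrite compose_assoc. simpl. rewrite compose_assoc.
    exact (HNd Hole Ad2 A0 b E2 eq_refl K HA0 HE2). }
  destruct (lift_need_body _ Ad E1 b1 m2 ltac:(lia)
              ltac:(subst u; pose proof (term_size_plug A (lam_need Ad E1));
                    unfold lam_need in *; simpl in *; lia)
              HAd HE1 HO3 Hb1) as (Ad0 & E10 & S3 & FAd0 & FE10 & HE10).
  exists Hole, A0, Ad0, E10, b, n2. repeat split; auto; try constructor; try lia.
  unfold lam_need. plug_simpl.
  eapply std_star_trans; [exact S1|]. eapply std_star_trans; [exact S2|]. exact S3.
Qed.

Lemma lift_need_under : forall O A1 Au A Ad E1 s a b e n1 n2,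
  u = App (plug (compose A1 Au) (App (plug A (lam_need Ad E1)) s)) e -> n1 + n2 = n ->
  isE O -> isA A1 -> isAup Au -> isA A -> isAdown Ad -> isE E1 ->
  need_frame O (CAppL (compose A1 Au) e) Ad ->
  rpr n1 a (plug (compose A1 Au) (App (plug A (lam_need Ad E1)) s)) -> rpr n2 b e ->
  lifted_need n O (App a b) (CAppL (compose A1 Au) e) A Ad E1 s.
Proof.
  intros O A1 Au A Ad E1 s a b e n1 n2 Hu Hn HO HA1 HAu HA HAd HE1 HNd Ha Hb.
  set (X := App (plug A (lam_need Ad E1)) s) in *.
  assert (HN2 : forall A10, rpr_ctx A10 A1 -> need_frame (compose O (CAppL A10 b)) Au Ad).
  { intros A10 FA Au2 Ad2 A2 g E2 K1 K2 HA2 HE2.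
    rewrite compose_assoc. simpl.
    pose proof (HNd (CAppL (compose A10 Au2) b) Ad2 A2 g E2) as H.
    simpl in H. rewrite compose_assoc in H. apply H; auto.
    simpl. rewrite !shape_compose, K1, (rpr_ctx_shape _ _ FA). reflexivity. }
  assert (Hprefix : forall A10, rpr_ctx A10 A1 -> isE (compose O (CAppL A10 b))).
  { intros A10 FA. eapply isE_prefix;
      [exact (HN2 A10 FA Au Ad Hole b Hole eq_refl eq_refl isA_hole isE_hole)|].
    rewrite !compose_assoc. reflexivity. }
  destruct (IH_size n1 a (plug (compose A1 Au) X) ltac:(lia) ltac:(subst u; simpl; lia))
    as [_ [Heval _]].
  assert (HO1 : isE (compose O (CAppL Hole b))).
  { eapply isE_prefix; [exact (Hprefix A1 (rpr_ctx_refl A1))|].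
    rewrite compose_assoc. reflexivity. }
  destruct (Heval _ A1 (plug Au X) HO1 (isA_isE _ HA1)
              (plug_compose _ _ _) Ha) as (A10 & s1 & m1 & S1 & _ & FA10 & Hs1 & Hm1).
  assert (Hsize : term_size (plug Au X) < term_size u).
  { subst u. rewrite plug_compose. pose proof (term_size_plug A1 (plug Au X)). simpl. lia. }
  destruct (IH_size m1 s1 (plug Au X) ltac:(lia) Hsize) as [Hneed _].
  destruct (Hneed _ Au A Ad E1 s (Hprefix A10 FA10) HAu HA HAd HE1 (HN2 A10 FA10) eq_refl Hs1)
    as (Au0 & A0 & Ad0 & E10 & s' & m & S2 & F1 & F2 & F3 & F4 & HE10 & Hs' & Hm).
  exists (CAppL (compose A10 Au0) b), A0, Ad0, E10, s', m. repeat split; auto; try lia.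
  - plug_simpl. eapply std_star_trans; [exact S1|]. exact S2.
  - constructor; [apply rpr_ctx_compose; auto | eapply rpr_rprs; eauto].
Qed.

Lemma lift_need_ok : forall t, lift_need n t u.
Proof.
  intros t O Au A Ad E1 s HO HAu HA HAd HE1 HNd Hu Ht.
  remember n as k eqn:Hk in Ht. remember u as v eqn:Hv in Ht.
  destruct Ht as [t0 | n1 n2 a b a' b' Ha Hb | n0 a a' Ha | n0 t0 c u0 Hbeta Hc].
  - exists Au, A, Ad, E1, s, 0. subst. repeat split; auto using rpr_ctx_refl; constructor.
  - rewrite <- Hv in Hu.
    destruct HAu as [|A1 Au e HA1 HAu]; simpl in Hu; injection Hu as -> ->.
    + eapply lift_need_root; eauto.
    + eapply lift_need_under; eauto.
  - rewrite <- Hv in Hu. destruct HAu; discriminate.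
  - rewrite Hv in Hc. rewrite <- Hk. apply lifted_need_beta with c; auto.
    exact (proj1 (IH_count n0 ltac:(lia) c u) O Au A Ad E1 s HO HAu HA HAd HE1 HNd Hu Hc).
Qed.

Lemma lift_eval_answer : forall O A1 A2 E1 e s a b n1 n2,
  u = App (plug A1 (Lam (plug A2 (plug E1 s)))) e -> n1 + n2 = n ->
  isE O -> isA A1 -> isA A2 -> isE E1 ->
  rpr n1 a (plug A1 (Lam (plug A2 (plug E1 s)))) -> rpr n2 b e ->
  lifted_eval n O (App a b) (compose (CAppL (compose A1 (CLam A2)) e) E1) s.
Proof.
  intros O A1 A2 E1 e s a b n1 n2 Hu Hn HO HA1 HA2 HE1 Ha Hb.
  set (Y := Lam (plug A2 (plug E1 s))) in *.
  assert (HO1 : isE (compose O (CAppL Hole b))) by (apply isE_compose; auto; repeat constructor).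
  destruct (IH_size n1 a (plug A1 Y) ltac:(lia) ltac:(subst u; simpl; lia)) as [_ [Heval _]].
  destruct (Heval _ A1 Y HO1 (isA_isE _ HA1) eq_refl Ha)
    as (A10 & s1 & m1 & S1 & _ & F1 & Hs1 & Hm1).
  assert (HA10 : isA A10) by (eapply rpr_ctx_isA; eauto).
  assert (HO2 : isE (compose O (CAppL A10 b))).
  { apply isE_compose; auto. constructor. apply isA_isE; auto. }
  destruct (rpr_Lam_std_star _ _ _ Hs1 _ eq_refl _ HO2) as (b1 & m2 & S2 & Hb1 & Hm2).
  assert (Hsize : term_size (plug (compose A2 E1) s) < term_size u).
  { subst u. rewrite plug_compose. pose proof (term_size_plug A1 Y). unfold Y in *. simpl in *. lia. }
  destruct (IH_size m2 b1 _ ltac:(lia) Hsize) as [_ [Heval3 _]].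
  assert (HO3 : isE (compose O (CAppL (compose A10 (CLam Hole)) b))).
  { apply isE_compose; auto. apply isA_isE. constructor; auto. constructor. }
  destruct (Heval3 _ (compose A2 E1) s HO3 (isE_ans _ _ HA2 HE1) eq_refl
              ltac:(rewrite plug_compose; exact Hb1)) as (E3 & s3 & m3 & S3 & HE3 & F3 & Hs3 & Hm3).
  exists (compose (CAppL (compose A10 (CLam Hole)) b) E3), s3, m3. repeat split; try lia.
  - plug_simpl. eapply std_star_trans; [exact S1|]. eapply std_star_trans; [exact S2|]. exact S3.
  - apply isE_ans; auto. constructor; auto. constructor.
  - simpl. rewrite !compose_assoc. simpl. constructor.
    + apply rpr_ctx_compose; auto. constructor. auto.
    + eapply rpr_rprs; eauto.
  - auto.
Qed.

Lemma lift_eval_need : forall t O Au A Ad E1 E2 s,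
  isE O -> isAup Au -> isA A -> isAdown Ad -> isE E1 -> isE E2 -> isA (compose Au Ad) ->
  u = plug (compose Au (CAppR (plug A (lam_need Ad E1)) E2)) s -> rpr n t u ->
  lifted_eval n O t (compose Au (CAppR (plug A (lam_need Ad E1)) E2)) s.
Proof.
  intros t O Au A Ad E1 E2 s HO HAu HA HAd HE1 HE2 HAA Hu Ht.
  set (side := plug A (lam_need Ad E1)) in *.
  assert (Hu' : u = plug Au (App side (plug E2 s))) by (rewrite Hu, plug_compose; reflexivity).
  destruct (lift_need_ok t O Au A Ad E1 (plug E2 s) HO HAu HA HAd HE1
              (need_frame_intro O Au Ad HO HAu HAd HAA) Hu' Ht)
    as (Au0 & A0 & Ad0 & E10 & s0 & m & S1 & FAu & FA & FAd & FE1 & HE10 & Hs0 & Hm).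
  assert (Hsize : term_size (plug E2 s) < term_size u).
  { rewrite Hu'. pose proof (term_size_plug Au (App side (plug E2 s))). simpl in *. lia. }
  destruct (IH_size m s0 _ Hm Hsize) as [_ [Heval _]].
  set (side0 := plug A0 (lam_need Ad0 E10)).
  assert (HAu0 : isAup Au0) by (eapply rpr_ctx_isAup; eauto).
  assert (HA0 : isA A0) by (eapply rpr_ctx_isA; eauto).
  assert (HAd0 : isAdown Ad0) by (eapply rpr_ctx_isAdown; eauto).
  assert (HAA0 : isA (compose Au0 Ad0)).
  { eapply isA_shape; [exact HAA|].
    rewrite !shape_compose, (rpr_ctx_shape _ _ FAu), (rpr_ctx_shape _ _ FAd). reflexivity. }
  assert (HO' : isE (compose O (compose Au0 (CAppR side0 Hole)))).
  { apply isE_compose; auto. apply isE_need; auto; constructor. }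
  destruct (Heval _ E2 s HO' HE2 eq_refl Hs0) as (E20 & s2 & m2 & S2 & HE20 & F2 & Hs2 & Hm2).
  exists (compose Au0 (CAppR side0 E20)), s2, m2. repeat split; try lia.
  - plug_simpl. eapply std_star_trans; [exact S1|]. exact S2.
  - apply isE_need; auto.
  - apply rpr_ctx_compose; auto. constructor; auto.
    apply rpr_ctx_plug; auto. apply rprs_lam_need; auto.
  - auto.
Qed.

Lemma lift_eval_app : forall a b a' b' n1 n2, u = App a' b' -> n1 + n2 = n ->
  rpr n1 a a' -> rpr n2 b b' ->
  forall O E s, isE O -> isE E -> App a' b' = plug E s -> lifted_eval n O (App a b) E s.
Proof.
  intros a b a' b' n1 n2 Hu Hn Ha Hb O E s HO HE. revert s.
  induction HE as [|E1 e HE1 _|A E1 HA HE1 IHE|Au A Ad E1 E2 HAu HA HAd HE1 _ HE2 _ HAA];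
    intros s Hs.
  - exists Hole, (App a b), n. simpl in *. subst. repeat split; try constructor; auto.
  - simpl in Hs. injection Hs as -> ->.
    destruct (IH_size n1 a (plug E1 s) ltac:(lia) ltac:(subst u; simpl; lia)) as [_ [Heval _]].
    assert (HO1 : isE (compose O (CAppL Hole b))) by (apply isE_compose; auto; repeat constructor).
    destruct (Heval _ E1 s HO1 HE1 eq_refl Ha) as (E10 & s0 & m & S1 & HE10 & F1 & Hs0 & Hm).
    exists (CAppL E10 b), s0, m. repeat split; auto; try lia.
    + plug_simpl. exact S1.
    + constructor; auto.
    + constructor; auto. eapply rpr_rprs; eauto.
  - destruct HA as [|A1 A2 e HA1 HA2]; [apply IHE; auto|].
    plug_simpl. injection Hs as -> ->. apply (lift_eval_answer _ _ _ _ _ _ _ _ n1 n2); auto.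
  - apply lift_eval_need; auto; [congruence|].
    rewrite Hu, <- Hn. constructor; auto.
Qed.

Lemma lift_eval_ok : forall t, lift_eval n t u.
Proof.
  intros t O E s HO HE Hu Ht.
  remember n as k eqn:Hk in Ht. remember u as v eqn:Hv in Ht.
  destruct Ht as [t0 | n1 n2 a b a' b' Ha Hb | n0 a a' Ha | n0 t0 c u0 Hbeta Hc].
  - exists E, s, 0. subst. repeat split; auto using rpr_ctx_refl; constructor.
  - eapply (lift_eval_app a b a' b' n1 n2); eauto; congruence.
  - rewrite <- Hv in Hu. pose proof (isE_plug_Lam _ _ _ HE (eq_sym Hu)). subst E.
    simpl in Hu. subst s. exists Hole, (Lam a), n0.
    repeat split; [constructor | constructor | constructor | constructor; auto | lia].
  - rewrite Hv in Hc. rewrite <- Hk. apply lifted_eval_beta with c; auto.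
    exact (proj1 (proj2 (IH_count n0 ltac:(lia) c u)) O E s HO HE Hu Hc).
Qed.

Lemma lift_inner_ok : forall t, lift_inner n t u.
Proof.
  intros t O Ad X HAd HO Hu Ht.
  destruct HAd as [|A Ad1 HA HAd1].
  - exists Hole, t, n. simpl in Hu; subst. repeat split; auto; constructor.
  - assert (HO0 : isE O).
    { eapply isE_prefix; [exact (HO (compose A (CLam Ad1)) Hole eq_refl isE_hole)|]. reflexivity. }
    assert (Hu' : u = plug A (Lam (plug Ad1 X))) by (rewrite Hu, plug_compose; reflexivity).
    destruct (lift_eval_ok t O A _ HO0 (isA_isE _ HA) Hu' Ht)
      as (A0 & s1 & m1 & S1 & _ & FA0 & Hs1 & Hm1).
    assert (HO1 : isE (compose O A0)).
    { eapply isE_prefix.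
      - apply (HO (compose A0 (CLam Ad1)) Hole); [|exact isE_hole].
        rewrite !shape_compose, (rpr_ctx_shape _ _ FA0). reflexivity.
      - rewrite !compose_assoc. reflexivity. }
    destruct (rpr_Lam_std_star _ _ _ Hs1 _ eq_refl _ HO1) as (b1 & m2 & S2 & Hb1 & Hm2).
    assert (Hsize : term_size (plug Ad1 X) < term_size u).
    { rewrite Hu'. pose proof (term_size_plug A (Lam (plug Ad1 X))). simpl in *. lia. }
    destruct (IH_size m2 b1 _ ltac:(lia) Hsize) as [_ [_ Hinner]].
    assert (HO2 : lam_frame (compose O (compose A0 (CLam Hole))) Ad1).
    { intros Ad2 E2 K HE2.
      assert (K' : shape (compose A0 (CLam Ad2)) = shape (compose A (CLam Ad1))).
      { rewrite !shape_compose, (rpr_ctx_shape _ _ FA0). simpl. rewrite K. reflexivity. }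
      pose proof (HO _ E2 K' HE2) as H. rewrite !compose_assoc. simpl. rewrite compose_assoc in H. exact H. }
    destruct (Hinner _ Ad1 X HAd1 HO2 eq_refl Hb1) as (Ad10 & X' & m3 & S3 & F3 & HX & Hm3).
    exists (compose A0 (CLam Ad10)), X', m3. repeat split; try lia.
    + plug_simpl. eapply std_star_trans; [exact S1|]. eapply std_star_trans; [exact S2|]. exact S3.
    + apply rpr_ctx_compose; auto. constructor; auto.
    + auto.
Qed.

End Lifting.

Lemma lifts_all : forall n t u, lifts n t u.
Proof.
  intro n. induction n as [n IHn] using lt_wf_ind.
  intros t u. remember (term_size u) as k eqn:Hk. revert t u Hk.
  induction k as [k IHk] using lt_wf_ind. intros t u Hk.
  assert (IH : forall n' t' u', n' <= n -> term_size u' < term_size u -> lifts n' t' u').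
  { intros n' t' u' Hn Hs. destruct (Nat.eq_dec n' n) as [->|Hne].
    - eapply IHk; eauto. lia.
    - apply IHn. lia. }
  split; [|split]; [apply lift_need_ok | apply lift_eval_ok | apply lift_inner_ok]; auto.
Qed.

Lemma rpr_redex_postpone : forall m s O Au A1 Ad E1 A2 v,
  isE O -> isAup Au -> isA A1 -> isAdown Ad -> isE E1 -> isA A2 -> value v ->
  isA (compose Au Ad) -> rpr m s (redex Au A1 Ad E1 A2 v) ->
  exists t, std_star (plug O s) (plug O t) /\ rprs t (contractum Au A1 Ad E1 A2 v).
Proof.
  intros m s O Au A1 Ad E1 A2 v HO HAu HA1 HAd HE1 HA2 [b ->] HAA Hs.
  destruct (proj1 (lifts_all m s _) O Au A1 Ad E1 (plug A2 (Lam b)) HO HAu HA1 HAd HE1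
              (need_frame_intro O Au Ad HO HAu HAd HAA) eq_refl Hs)
    as (Au0 & A10 & Ad0 & E10 & s1 & m1 & S1 & FAu & FA1 & FAd & FE1 & HE10 & Hs1 & _).
  assert (HAu0 : isAup Au0) by (eapply rpr_ctx_isAup; eauto).
  assert (HA10 : isA A10) by (eapply rpr_ctx_isA; eauto).
  assert (HAd0 : isAdown Ad0) by (eapply rpr_ctx_isAdown; eauto).
  assert (HAA0 : isA (compose Au0 Ad0)).
  { eapply isA_shape; [exact HAA|].
    rewrite !shape_compose, (rpr_ctx_shape _ _ FAu), (rpr_ctx_shape _ _ FAd). reflexivity. }
  set (side := plug A10 (lam_need Ad0 E10)).
  assert (HO1 : isE (compose O (compose Au0 (CAppR side Hole)))).
  { apply isE_compose; auto. apply isE_need; auto; constructor. }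
  destruct (proj1 (proj2 (lifts_all m1 s1 _)) _ A2 (Lam b) HO1 (isA_isE _ HA2) eq_refl Hs1)
    as (A20 & v0 & m2 & S2 & HA20 & FA2 & Hv0 & _).
  assert (HA20' : isA A20) by (eapply rpr_ctx_isA; eauto).
  assert (HO2 : isE (compose (compose O (compose Au0 (CAppR side Hole))) A20))
    by (apply isE_compose; auto).
  destruct (rpr_Lam_std_star _ _ _ Hv0 _ eq_refl _ HO2) as (b0 & m3 & S3 & Hb0 & _).
  exists (contractum Au0 A10 Ad0 E10 A20 (Lam b0)). split.
  - plug_simpl. eapply std_star_trans; [exact S1|].
    eapply std_star_trans; [exact S2|]. eapply std_star_trans; [exact S3|].
    apply (std_star_step _ _ _ (std_step_plug O _ _ HO (beta_need_std_step _ _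
             (beta_need_intro Au0 A10 Ad0 E10 A20 (Lam b0) HAu0 HA10 HAd0 HE10 HA20'
                (ex_intro _ b0 eq_refl) HAA0)))).
    constructor.
  - apply rprs_contractum; auto. apply rprs_lam. eapply rpr_rprs; eauto.
Qed.

Lemma rpr_std_step_postpone : forall n t u u', rpr n t u -> std_step u u' ->
  exists t'', std_star t t'' /\ rprs t'' u'.
Proof.
  intros n t u u' Ht Hstep. destruct Hstep as [E r r' HE Hr].
  destruct Hr as [Au A1 Ad E1 A2 v HAu HA1 HAd HE1 HA2 Hv HAA].
  destruct (proj1 (proj2 (lifts_all n t _)) Hole E _ isE_hole HE eq_refl Ht)
    as (E0 & s0 & m & S1 & HE0 & FE0 & Hs0 & _).
  destruct (rpr_redex_postpone m s0 E0 Au A1 Ad E1 A2 v HE0 HAu HA1 HAd HE1 HA2 Hv HAA Hs0)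
    as (t0 & S2 & Ht0).
  exists (plug E0 t0). split.
  - eapply std_star_trans; [exact S1 | exact S2].
  - apply rpr_ctx_plug; auto.
Qed.

(** * Standard reduction sequences *)

Definition same_head (t u : term) : Prop :=
  (exists k, t = Var k /\ u = Var k) \/
  (exists a b, t = Lam a /\ u = Lam b /\ rprs a b) \/
  (exists a b c d, t = App a b /\ u = App c d /\ rprs a c /\ rprs b d).

Lemma rpr_std_star_same_head : forall n t u, rpr n t u -> exists t0, std_star t t0 /\ same_head t0 u.
Proof.
  induction 1.
  - exists t. split; [constructor|]. destruct t; unfold same_head.
    + left; eauto.
    + right; left; eauto using rprs_refl.
    + right; right; do 4 eexists; eauto using rprs_refl.
  - exists (App a b). split; [constructor|].
    right; right; do 4 eexists; repeat split; eapply rpr_rprs; eauto.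
  - exists (Lam a). split; [constructor|].
    right; left; do 2 eexists; repeat split; eapply rpr_rprs; eauto.
  - destruct IHrpr as (t0 & H1 & H2). exists t0. split; auto.
    econstructor; [apply beta_need_std_step|]; eauto.
Qed.

Lemma last_cons_default : forall (l : list term) x d, last (x :: l) d = last l x.
Proof.
  induction l; intros; [reflexivity|].
  change (last (x :: a :: l) d) with (last (a :: l) d). rewrite !IHl. reflexivity.
Qed.

Lemma last_map : forall (f : term -> term) (l : list term) d,
  last (map f l) (f d) = f (last l d).
Proof.
  induction l; intros; [reflexivity|].
  simpl map. rewrite !last_cons_default. apply IHl.
Qed.

Lemma last_app_map : forall l1 l2 x y,
  last (map (fun e => App e y) l1 ++ map (App (last l1 x)) l2) (App x y) =
  App (last l1 x) (last l2 y).
Proof.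
  induction l1; intros.
  - apply (last_map (App x) l2 y).
  - rewrite (last_cons_default l1 a x). cbn [map app]. rewrite last_cons_default. apply IHl1.
Qed.

Lemma R_std_star : forall e t, std_star e t -> forall l, R (t :: l) ->
  exists l', R (e :: l') /\ last l' e = last l t.
Proof.
  induction 1; intros l HR.
  - exists l. auto.
  - destruct (IHstd_star l HR) as (l'' & H1 & H2).
    exists (b :: l''). split; [constructor; auto|]. rewrite last_cons_default. auto.
Qed.

Lemma rprs_R : forall L, R L -> forall x xs, L = x :: xs -> forall y, rprs y x ->
  exists l', R (y :: l') /\ last l' y = last xs x.
Proof.
  induction 1 as [k | e l HR IHR | a0 a1 l HS HR IHR | c1 l1 f1 l2 HR1 IHR1 HR2 IHR2];
    intros x xs HL y [n Hy].
  - injection HL as <- <-. destruct (rpr_std_star_same_head _ _ _ Hy) as (t0 & S & Hs).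
    destruct Hs as [(k' & -> & Hk)|[(a & b & -> & Hb & _)|(a & b & c & d & -> & Hd & _)]];
      try discriminate.
    injection Hk as ->. exact (R_std_star _ _ S [] (R_var _)).
  - simpl in HL. injection HL as <- <-. destruct (rpr_std_star_same_head _ _ _ Hy) as (t0 & S & Hs).
    destruct Hs as [(k & -> & Hk)|[(a & b & -> & Hb & Hab)|(a & b & c & d & -> & Hd & _)]];
      try discriminate.
    injection Hb as <-.
    destruct (IHR e l eq_refl a Hab) as (la & H1 & H2).
    apply R_lam in H1. simpl in H1.
    destruct (R_std_star _ _ S _ H1) as (l' & H3 & H4). exists l'. split; auto.
    rewrite H4, last_map, H2. symmetry. apply last_map.
  - injection HL as <- <-. destruct (rpr_std_step_postpone n y a0 a1 Hy HS) as (t'' & S & Ht).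
    destruct (IHR a1 l eq_refl t'' Ht) as (l'' & H1 & H2).
    destruct (R_std_star _ _ S _ H1) as (l' & H3 & H4). exists l'. split; auto.
    rewrite H4, H2. symmetry. apply last_cons_default.
  - simpl in HL. injection HL as <- <-. destruct (rpr_std_star_same_head _ _ _ Hy) as (t0 & S & Hs).
    destruct Hs as [(k & -> & Hk)|[(a & b & -> & Hb & _)|(a & b & c & d & -> & Hd & Hac & Hbd)]];
      try discriminate.
    injection Hd as <- <-.
    destruct (IHR1 c1 l1 eq_refl a Hac) as (la & H1 & H2).
    destruct (IHR2 f1 l2 eq_refl b Hbd) as (lb & H3 & H4).
    pose proof (R_app _ _ _ _ H1 H3) as H5. simpl in H5.
    destruct (R_std_star _ _ S _ H5) as (l'' & H6 & H7). exists l''. split; auto.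
    rewrite H7, last_app_map, H2, H4. symmetry. apply last_app_map.
Qed.

Theorem lemma4 : forall (e0 e1 : term) (l : list term),
  pr e0 e1 -> R (e1 :: l) ->
  exists l' : list term, R (e0 :: l') /\ last l' e0 = last l e1.
Proof.
  intros e0 e1 l H01 HR. exact (rprs_R _ HR e1 l eq_refl e0 (pr_rprs _ _ H01)).
Qed.
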